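(* Let $S$ be an instance of Max Lin-2 AA with $m$ equations in which no two equations have the same left-hand side, and let $\rho$ be the maximum over variables $z_i$ of the number of equations of $S$ containing $z_i$. Run the variant of Algorithm $\mathcal{A}$ in which, in step (2), an arbitrary variable still occurring in $S$ is chosen and marked. Then after the first $k-1$ iterations at most $2\rho(k-1)$ equations have been deleted from $S$ in total (by marking or by the combining rule). Consequently, if $2\rho(k-1)<m$, the algorithm marks $k$ equations.
   Context: Max Lin-2 AA: an instance is a system $S$ of $m$ linear equations over $\mathbb{F}_2$ in variables $z_1,\dots,z_n$, Equation $j$ being $\sum_{i\in\alpha_j} z_i=b_j$ with $\emptyset\neq\alpha_j\subseteq\{1,\dots,n\}$, $b_j\in\mathbb{F}_2$, positive integer weight $w_j$, and a nonnegative integer parameter $k$. Combining rule: if two equations $\sum_{i\in\alpha}z_i=b'$ (weight $w'$) and $\sum_{i\in\alpha}z_i=b''$ (weight $w''$) have the same left-hand side, replace them by one equation with that left-hand side: if $b'=b''$, with right-hand side $b'$ and weight $w'+w''$; otherwise, the one of larger weight, with new weight $|w'-w''|$; an equation of resulting weight $0$ is deleted. Algorithm $\mathcal{A}$: initially nothing is marked. While $S\neq\emptyset$ and fewer than $k$ equations are marked: (1) for each $i$ compute $\rho_i$, the number of equations currently in $S$ containing $z_i$; (2) choose a variable $z_l$ still occurring in $S$ with minimum $\rho_l$ and mark it; (3) choose an arbitrary equation $\sum_{i\in\alpha}z_i=b$ of $S$ containing $z_l$; (4) mark this equation and delete it from $S$; (5) replace every other equation $\sum_{i\in\alpha'}z_i=b'$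 of $S$ containing $z_l$ by $\sum_{i\in\alpha\triangle\alpha'}z_i=b+b'$ (keeping its weight), where $\triangle$ is symmetric difference; (6) apply the combining rule exhaustively (deleting equations of weight $0$). *)

From mathcomp Require Import all_boot.
From Stdlib Require Import Relation_Operators.
Set Implicit Arguments. Unset Strict Implicit. Unset Printing Implicit Defensive.

(* An equation  sum_{i in alpha} z_i = b  with weight w, over variables z_0..z_{n-1}
   (0-based indexing of the variables z_1..z_n). *)
Definition lineq (n : nat) : Type := ({set 'I_n} * bool * nat)%type.
Definition lhs n (e : lineq n) : {set 'I_n} := e.1.1.
Definition rhs n (e : lineq n) : bool := e.1.2.
Definition wt  n (e : lineq n) : nat := e.2.

Definition symdiff n (A B : {set 'I_n}) : {set 'I_n} := (A :\: B) :|: (B :\: A).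

Definition combine n (e1 e2 : lineq n) : seq (lineq n) :=
  if rhs e1 == rhs e2 then [:: (lhs e1, rhs e1, wt e1 + wt e2)]
  else if wt e1 == wt e2 then [::]   (* resulting weight 0: deleted *)
  else if wt e2 < wt e1 then [:: (lhs e1, rhs e1, wt e1 - wt e2)]
  else [:: (lhs e1, rhs e2, wt e2 - wt e1)].

Definition combine_step n (S S' : seq (lineq n)) : Prop :=
  exists s1 s2 s3 e1 e2,
    S = s1 ++ e1 :: s2 ++ e2 :: s3 /\ lhs e1 = lhs e2 /\
    S' = s1 ++ s2 ++ s3 ++ combine e1 e2.

Definition combine_exhaust n (S S' : seq (lineq n)) : Prop :=
  clos_refl_trans _ (@combine_step n) S S' /\ uniq (map (@lhs n) S').

Definition alg_step n (S S' : seq (lineq n)) : Prop :=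
  exists s1 e s2 (l : 'I_n),
    S = s1 ++ e :: s2 /\ l \in lhs e /\
    combine_exhaust
      (map (fun e' => if l \in lhs e' then (symdiff (lhs e) (lhs e'), rhs e (+) rhs e', wt e')
                      else e') (s1 ++ s2)) S'.

(* run k S0 j S : starting from S0, after j iterations (j equations marked)
   the system is S; the loop only continues while S <> [] and fewer than k marked. *)
Inductive run n (k : nat) (S0 : seq (lineq n)) : nat -> seq (lineq n) -> Prop :=
| run0 : run k S0 0 S0
| runS j S S' : run k S0 j S -> j < k -> S != [::] -> alg_step S S' -> run k S0 j.+1 S'.

Definition halted n (k j : nat) (S : seq (lineq n)) : bool := (S == [::]) || (k <= j).

Definition rho n (S : seq (lineq n)) : nat :=
  \max_(i < n) count (fun e : lineq n => i \in lhs e) S.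

From mathcomp Require Import all_boot.
From Stdlib Require Import Relation_Operators.
Set Implicit Arguments. Unset Strict Implicit. Unset Printing Implicit Defensive.

(* Let P be the set of variables marked so far and L the composite of the elimination
   maps u |-> if l \in u then symdiff a u else u.  Every current left-hand side is L x for
   an original one x, and an original x with L x != set0 that collides with no other
   original left-hand side under L still occurs: its image occurs exactly once, and the
   combining rule never touches a left-hand side occurring once.  Moreover L moves all
   sets with the same trace on P by the same symmetric difference, so it is injective
   on the sets disjoint from P.  Hence a lost equation either meets P (at most rho |P|
   of them) or is disjoint from P and collides with one meeting P; the latter are
   injectively mapped by L into the images of the former.  So at most 2 rho |P|
   equations are lost, and |P| is at most the number of iterations. *)

Local Notation lhss S := (map (@lhs _) S).

Section SymDiff.
Variable n : nat.
Implicit Types (a u v : {set 'I_n}).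

Lemma symdiffE u v i : (i \in symdiff u v) = (i \in u) (+) (i \in v).
Proof. by rewrite /symdiff !inE; case: (i \in u); case: (i \in v). Qed.

Lemma symdiff_eq0 u v : (symdiff u v == set0) = (u == v).
Proof.
apply/eqP/eqP => [/setP E | ->]; apply/setP => i; [move: (E i) |];
  by rewrite symdiffE inE; case: (i \in u); case: (i \in v).
Qed.

Lemma symdiffKl a u v : symdiff (symdiff a u) (symdiff a v) = symdiff u v.
Proof. by apply/setP => i; rewrite !symdiffE addbACA addbb. Qed.

End SymDiff.

Lemma card_bigcup_le (T I : finType) (P : pred I) (F : I -> {set T}) :
  #|\bigcup_(i | P i) F i| <= \sum_(i | P i) #|F i|.
Proof.
apply: (big_ind2 (fun (X : {set T}) m => #|X| <= m)) => //; first by rewrite cards0.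
move=> X1 m1 X2 m2 le1 le2; rewrite cardsU (leq_trans (leq_subr _ _)) //.
exact: leq_add.
Qed.

Lemma count_mem_map_inj_at (T U : eqType) (f : T -> U) (s : seq T) x :
  uniq s -> x \in s -> {in s, forall y, f y = f x -> y = x} ->
  count_mem (f x) (map f s) = 1.
Proof.
move=> us xs injx; rewrite count_map -[RHS]/(nat_of_bool true) -xs -count_uniq_mem //.
by apply: eq_in_count => y ys /=; apply/eqP/eqP => [/injx-> | ->].
Qed.

Section Combining.
Variable n : nat.
Implicit Types (X Y : seq (lineq n)) (h : {set 'I_n}).

Lemma combine_lhs (e1 e2 : lineq n) : all (fun e => lhs e == lhs e1) (combine e1 e2).
Proof. by rewrite /combine; repeat case: ifP => _; rewrite /= ?eqxx. Qed.

Lemma combine_step_lhss X Y : combine_step X Y -> {subset lhss Y <= lhss X}.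
Proof.
move=> [s1 [s2 [s3 [e1 [e2 [-> [_ ->]]]]]]] h.
rewrite !(map_cat, mem_cat) /= !(inE, map_cat, mem_cat).
case/or4P => [-> | -> | -> | /mapP[e /(allP (combine_lhs e1 e2)) /eqP <- ->]];
  by rewrite ?eqxx ?orbT.
Qed.

Lemma combine_step_count1 X Y h : combine_step X Y ->
  count_mem h (lhss X) = 1 -> count_mem h (lhss Y) = 1.
Proof.
move=> [s1 [s2 [s3 [e1 [e2 [-> [E ->]]]]]]].
rewrite !(count_cat, map_cat) /= !(count_cat, map_cat) /= -E.
have [<-|neq] := eqVneq (lhs e1) h; first by move/eqP; rewrite /= !add1n !addnS.
have fresh : h \notin lhss (combine e1 e2).
  by apply/mapP => -[e /(allP (combine_lhs e1 e2)) /eqP -> eh]; rewrite eh eqxx in neq.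
by rewrite (count_memPn fresh) !add0n addn0 addnA.
Qed.

Lemma combine_rt_lhss X Y : clos_refl_trans _ (@combine_step n) X Y ->
  {subset lhss Y <= lhss X}.
Proof.
by elim=> [x y /combine_step_lhss | x | x y z _ subxy _ subyz h /subyz /subxy].
Qed.

Lemma combine_rt_count1 X Y h : clos_refl_trans _ (@combine_step n) X Y ->
  count_mem h (lhss X) = 1 -> count_mem h (lhss Y) = 1.
Proof.
elim=> [x y step | // | x y z _ IHxy _ IHyz /IHxy /IHyz //].
exact: combine_step_count1.
Qed.

End Combining.

Section Tracking.
Variable n : nat.
Implicit Types (P a u x y : {set 'I_n}) (L : {set 'I_n} -> {set 'I_n}).

(* Equivalently, [L x = symdiff x (c (x :&: P))] for some [c]: [L] translates each class
   of sets with a common trace on [P] rigidly. *)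
Definition piecewise_translation P L :=
  forall x y, x :&: P = y :&: P -> symdiff (L x) (L y) = symdiff x y.

Lemma piecewise_translation_inj P L x y :
  piecewise_translation P L -> x :&: P = y :&: P -> L x = L y -> x = y.
Proof.
move=> HL xyP Lxy; apply/eqP; rewrite -symdiff_eq0 -HL //.
by rewrite Lxy symdiff_eq0.
Qed.

Definition elim_lhs a (l : 'I_n) u := if l \in u then symdiff a u else u.

Lemma elim_lhs0 a l : elim_lhs a l set0 = set0.
Proof. by rewrite /elim_lhs inE. Qed.

Lemma piecewise_translation_elim P L a l :
  piecewise_translation P L -> piecewise_translation (l |: P) (elim_lhs a l \o L).
Proof.
move=> HL x y /setP xyP.
have lxy : (l \in x) = (l \in y) by move: (xyP l); rewrite !inE eqxx !andbT.
have xyP' : x :&: P = y :&: P.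
  apply/setP => i; move: (xyP i); rewrite !inE.
  by have [->|_] := eqVneq i l; rewrite ?lxy //= => ->.
have lLxy : (l \in L x) = (l \in L y).
  move/setP: (HL x y xyP') => /(_ l); rewrite !symdiffE lxy addbb.
  by case: (l \in L x); case: (l \in L y).
by rewrite /= /elim_lhs -lLxy; case: ifP; rewrite ?symdiffKl HL.
Qed.

Definition tracks P L (S0 S : seq (lineq n)) :=
  [/\ L set0 = set0, piecewise_translation P L, uniq (lhss S),
      {subset lhss S <= map L (lhss S0)} &
      {in lhss S0, forall x, L x != set0 ->
         {in lhss S0, forall y, L y = L x -> y = x} -> L x \in lhss S}].

Lemma tracks_refl (S0 : seq (lineq n)) : uniq (lhss S0) -> tracks set0 id S0 S0.
Proof. by move=> uS0; split=> // h; rewrite map_id. Qed.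

Lemma lhss_eliminate (e : lineq n) l (s : seq (lineq n)) :
  lhss (map (fun e' => if l \in lhs e' then (symdiff (lhs e) (lhs e'), rhs e (+) rhs e', wt e')
                       else e') s)
  = map (elim_lhs (lhs e) l) (lhss s).
Proof. by rewrite -!map_comp; apply: eq_map => e' /=; rewrite /elim_lhs; case: ifP. Qed.

Lemma tracks_alg_step P L (S0 S S' : seq (lineq n)) :
  tracks P L S0 S -> alg_step S S' -> exists l a, tracks (l |: P) (elim_lhs a l \o L) S0 S'.
Proof.
move=> [L0 HL uS LS0 survS] [s1 [e [s2 [l [defS [le [combS uS']]]]]]].
set T := elim_lhs (lhs e) l; move: combS; set E := map _ _ => combS.
have lhsE : lhss E = map T (lhss (s1 ++ s2)) by rewrite lhss_eliminate.
have defS' : perm_eq (lhss S) (lhs e :: lhss (s1 ++ s2)).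
  by rewrite defS !map_cat /= -cat1s perm_catCA.
have ues : uniq (lhs e :: lhss (s1 ++ s2)) by rewrite -(perm_uniq defS').
have subS : {subset lhss (s1 ++ s2) <= lhss S}.
  by move=> u us; rewrite (perm_mem defS') inE us orbT.
have subS0 u : u \in lhss (s1 ++ s2) -> exists2 x, x \in lhss S0 & u = L x.
  by move/subS/LS0/mapP.
exists l, (lhs e); split.
- by rewrite /= L0 elim_lhs0.
- exact: piecewise_translation_elim.
- exact: uS'.
- move=> h /(combine_rt_lhss combS); rewrite lhsE => /mapP[u /subS0[x x0 ->] ->].
  by apply/mapP; exists x.
move=> x x0 TLx0 injTLx.
have Lx0 : L x != set0 by apply: contraNneq TLx0 => /= ->; rewrite elim_lhs0.
have Lxe : L x != lhs e.
  by apply: contraNneq TLx0 => /= ->; rewrite /T /elim_lhs le symdiff_eq0.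
have Lxs : L x \in lhss (s1 ++ s2).
  have injLx : {in lhss S0, forall y, L y = L x -> y = x}.
    by move=> y y0 Lyx; apply: injTLx; rewrite //= Lyx.
  by move: (survS x x0 Lx0 injLx); rewrite (perm_mem defS') inE (negbTE Lxe).
have count1 : count_mem (T (L x)) (lhss E) = 1.
  rewrite lhsE; apply: count_mem_map_inj_at => //; first by case/andP: ues.
  by move=> u /subS0[y y0 ->] TLyx; congr L; apply: injTLx.
by rewrite -has_pred1 has_count (combine_rt_count1 combS count1).
Qed.

Lemma run_tracks k (S0 S : seq (lineq n)) j :
  uniq (lhss S0) -> run k S0 j S -> exists P L, #|P| <= j /\ tracks P L S0 S.
Proof.
move=> uS0; elim=> [|{}j S1 S2 _ [P [L [cardP trS1]]] _ _ step].
  by exists set0, id; rewrite cards0; split=> //; apply: tracks_refl.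
have [l [a trS2]] := tracks_alg_step trS1 step.
exists (l |: P), (elim_lhs a l \o L); split=> //.
by rewrite cardsU1 -add1n leq_add ?leq_b1.
Qed.

End Tracking.

Definition survivors n (A : {set {set 'I_n}}) (L : {set 'I_n} -> {set 'I_n}) :=
  [set x in A | (L x != set0) && [forall y in A, (L y == L x) ==> (y == x)]].

Section Counting.
Variables (n : nat) (A : {set {set 'I_n}}) (P : {set 'I_n}) (L : {set 'I_n} -> {set 'I_n}).

Lemma card_meeting_le r : (forall i, #|[set x in A | i \in x]| <= r) ->
  #|[set x in A | x :&: P != set0]| <= #|P| * r.
Proof.
move=> le_r.
have sub : [set x in A | x :&: P != set0] \subset \bigcup_(i in P) [set x in A | i \in x].
  apply/subsetP => x; rewrite inE => /andP[xA /set0Pn[i]]; rewrite inE => /andP[ix iP].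
  by apply/bigcupP; exists i; rewrite // inE xA.
rewrite (leq_trans (subset_leq_card sub)) // (leq_trans (card_bigcup_le _ _)) //.
by rewrite -sum_nat_const leq_sum.
Qed.

Hypotheses (A0 : set0 \notin A) (L0 : L set0 = set0) (HL : piecewise_translation P L).

Lemma card_disjoint_nonsurvivors_le :
  #|[set x in A :\: survivors A L | x :&: P == set0]| <= #|[set x in A | x :&: P != set0]|.
Proof.
set Z := [set x in _ | _]; set B := [set x in A | _].
have injZ : {in Z &, injective L}.
  move=> x y; rewrite !inE => /andP[/andP[_ xA] /eqP xP] /andP[/andP[_ yA] /eqP yP].
  by apply: piecewise_translation_inj HL _; rewrite xP yP.
rewrite -(card_in_imset injZ) (leq_trans (subset_leq_card _) (leq_imset_card L B)) //.
apply/subsetP => _ /imsetP[x xZ ->].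
move: xZ; rewrite !inE negb_and => /andP[/andP[notsurv xA] /eqP xP].
have Lx0 : L x != set0.
  apply: contraNneq A0 => Lx0; suff <- : x = set0 by [].
  by apply: piecewise_translation_inj HL _ _; rewrite ?xP ?set0I ?L0.
move: notsurv; rewrite xA Lx0 /= => /forall_inPn[y yA].
rewrite negb_imply => /andP[/eqP Lyx yx].
apply/imsetP; exists y => //; rewrite inE yA /=.
apply: contra yx => /eqP yP; apply/eqP.
by apply: piecewise_translation_inj HL _ Lyx; rewrite xP yP.
Qed.

Lemma card_nonsurvivors_le r : (forall i, #|[set x in A | i \in x]| <= r) ->
  #|A :\: survivors A L| <= 2 * r * #|P|.
Proof.
move=> le_r.
have split : A :\: survivors A L \subset
  [set x in A | x :&: P != set0] :|: [set x in A :\: survivors A L | x :&: P == set0].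
  apply/subsetP => x xAI; have /setDP[xA _] := xAI.
  apply/setUP; case: (boolP (x :&: P == set0)) => xP; [right | left];
    by rewrite in_set ?xAI ?xA.
rewrite (leq_trans (subset_leq_card split)) // (leq_trans (leq_card_setU _ _)) //.
have meet := card_meeting_le le_r; rewrite mulnC in meet.
by rewrite -mulnA mul2n -addnn leq_add // (leq_trans card_disjoint_nonsurvivors_le).
Qed.

End Counting.

Lemma card_occurrences_le_rho n (S0 : seq (lineq n)) i :
  #|[set x in [set x in lhss S0] | i \in x]| <= rho S0.
Proof.
have -> : [set x in [set x in lhss S0] | i \in x]
          = [set x in filter (fun x : {set 'I_n} => i \in x) (lhss S0)].
  by apply/setP => x; rewrite !inE mem_filter andbC.
rewrite cardsE (leq_trans (card_size _)) // size_filter count_map.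
exact: (leq_bigmax (F := fun i => count (fun e : lineq n => i \in lhs e) S0) i).
Qed.

Lemma tracks_lost_le n P L (S0 S : seq (lineq n)) :
  uniq (lhss S0) -> all (fun e => lhs e != set0) S0 -> tracks P L S0 S ->
  size S0 - size S <= 2 * rho S0 * #|P|.
Proof.
move=> uS0 nzS0 [L0 HL _ _ survS]; set A := [set x in lhss S0].
have A0 : set0 \notin A.
  by rewrite inE; apply/mapP => -[e /(allP nzS0) + e0]; rewrite -e0 eqxx.
have injI : {in survivors A L &, injective L}.
  move=> x y; rewrite !inE => /and3P[_ _ /forall_inP injx] /andP[yA _] Lxy.
  by apply/esym/eqP/(implyP (injx y _)); rewrite ?inE ?Lxy.
have survS' : #|survivors A L| <= size S.
  rewrite -(card_in_imset injI) -(size_map (@lhs n) S) (leq_trans _ (card_size _)) //.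
  apply: subset_leq_card; apply/subsetP => _ /imsetP[x + ->].
  rewrite !inE => /and3P[x0 Lx0 /forall_inP injx]; apply: survS => // y y0 Lyx.
  by apply/eqP/(implyP (injx y _)); rewrite ?inE ?Lyx.
have subA : survivors A L \subset A by apply/subsetP => x; rewrite inE => /andP[].
apply: leq_trans (card_nonsurvivors_le A0 L0 HL (@card_occurrences_le_rho n S0)).
by rewrite cardsD (setIidPr subA) cardsE (card_uniqP uS0) size_map leq_sub2l.
Qed.

Lemma run_index_le n k (S0 S : seq (lineq n)) j : run k S0 j S -> j <= k.
Proof. by elim. Qed.

Theorem mainTheorem6 (n : nat) (S : seq (lineq n)) (k : nat) :
  all (fun e : lineq n => (lhs e != set0) && (0 < wt e)) S ->
  uniq (map (@lhs n) S) ->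
  (forall j S', j <= k - 1 -> run k S j S' -> size S - size S' <= 2 * rho S * (k - 1)) /\
  (2 * rho S * (k - 1) < size S ->
     forall j S', run k S j S' -> halted k j S' -> j = k).
Proof.
move=> valid uS.
have nzS : all (fun e => lhs e != set0) S by apply: sub_all valid => e /andP[].
have lost j S' : j <= k - 1 -> run k S j S' -> size S - size S' <= 2 * rho S * (k - 1).
  move=> le_j /(run_tracks uS) [P [L [cardP trS']]].
  by rewrite (leq_trans (tracks_lost_le uS nzS trS')) // leq_mul2l (leq_trans cardP) ?orbT.
split=> // lt_m j S' runS'; rewrite /halted.
have [le_kj _ | lt_jk] := leqP k j.
  by apply/eqP; rewrite eqn_leq le_kj (run_index_le runS').
rewrite orbF => /eqP S'0.
have le_j : j <= k - 1 by rewrite leq_subRL ?add1n // (leq_ltn_trans _ lt_jk).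
by move: (lost j S' le_j runS'); rewrite S'0 subn0 leqNgt lt_m.
Qed.
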